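(* Let $(A_i,\gamma_i)_{i\in I}$ be a family of quasiordered sets with all $A_i$ nonempty, and let $j,k\in I$, $j\neq k$, be such that there exist $a_j,b_j,c_j\in A_j$ with $a_j\neq c_j$, $(a_j,c_j)\in\gamma_j$, $(a_j,b_j)\notin\gamma_j$, and such that $\gamma_k\neq A_k\times A_k$ (with $|A_k|>1$). Then the product quasiorder $\prod_{i\in I}\gamma_i$ is not a half-space on $\prod_{i\in I}A_i$.
   Context: A quasiorder on $A$ is a reflexive and transitive relation; $\Delta_A=\{(a,a)\mid a\in A\}$. A quasiorder $\alpha$ on $A$ is a half-space if there is a quasiorder $\beta$ on $A$ with $\alpha\cup\beta=A\times A$ and $\alpha\cap\beta=\Delta_A$. The direct product quasiorder is $\prod_{i\in I}\gamma_i=\{(\underline a,\underline b)\mid \underline a,\underline b\in\prod_{i\in I}A_i,\ (\underline a(i),\underline b(i))\in\gamma_i \text{ for all } i\in I\}$. *)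

Definition reflexive_rel {A : Type} (r : A -> A -> Prop) : Prop :=
  forall a, r a a.

Definition transitive_rel {A : Type} (r : A -> A -> Prop) : Prop :=
  forall a b c, r a b -> r b c -> r a c.

Definition quasiorder {A : Type} (r : A -> A -> Prop) : Prop :=
  reflexive_rel r /\ transitive_rel r.

Definition half_space {A : Type} (alpha : A -> A -> Prop) : Prop :=
  quasiorder alpha /\
  exists beta : A -> A -> Prop,
    quasiorder beta /\
    (forall a b, alpha a b \/ beta a b) /\
    (forall a b, (alpha a b /\ beta a b) <-> a = b).

Definition prod_rel {I : Type} {A : I -> Type}
  (gamma : forall i, A i -> A i -> Prop) : (forall i, A i) -> (forall i, A i) -> Prop :=
  fun a b => forall i, gamma i (a i) (b i).

(* Take points x, y, z of the product that agree off j and k, with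
   x = (a_j, q), y = (b_j, p), z = (c_j, q) at (j, k), where (p, q) is not in
   gamma_k.  Then x <= z, while x, y are incomparable at j and y, z at k.  If
   beta were a complementary quasiorder, (x, y) and (y, z) would lie in beta,
   hence so would (x, z); but then x = z, contradicting a_j <> c_j. *)

From Stdlib Require Import Classical ClassicalEpsilon.

Definition upd {I : Type} {A : I -> Type} (f : forall i, A i) (i0 : I) (v : A i0)
  : forall i, A i :=
  fun i => match excluded_middle_informative (i0 = i) with
           | left e => eq_rect i0 A v i e
           | right _ => f i
           end.

Lemma upd_eq {I : Type} {A : I -> Type} (f : forall i, A i) i0 (v : A i0) :
  upd f i0 v i0 = v.
Proof.
  unfold upd; destruct (excluded_middle_informative (i0 = i0)) as [e | n].
  - symmetry; apply Eq_rect_eq.eq_rect_eq.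
  - contradiction.
Qed.

Lemma upd_neq {I : Type} {A : I -> Type} (f : forall i, A i) i0 (v : A i0) i :
  i0 <> i -> upd f i0 v i = f i.
Proof.
  intro n; unfold upd; destruct (excluded_middle_informative (i0 = i)); tauto.
Qed.

Lemma prod_rel_upd {I : Type} {A : I -> Type} (gamma : forall i, A i -> A i -> Prop)
  (Hrefl : forall i, reflexive_rel (gamma i)) (f : forall i, A i) i0 (u v : A i0) :
  gamma i0 u v -> prod_rel gamma (upd f i0 u) (upd f i0 v).
Proof.
  intros Huv i; destruct (classic (i0 = i)) as [<- | n].
  - rewrite !upd_eq; exact Huv.
  - rewrite !upd_neq by exact n; apply Hrefl.
Qed.

Lemma half_space_complement_antisym {A : Type} (alpha beta : A -> A -> Prop)
  (Hbeta : transitive_rel beta)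
  (Hcup : forall a b, alpha a b \/ beta a b)
  (Hcap : forall a b, (alpha a b /\ beta a b) <-> a = b) (x y z : A) :
  alpha x z -> ~ alpha x y -> ~ alpha y z -> x = z.
Proof.
  intros Hxz Hxy Hyz.
  assert (Bxy : beta x y) by (destruct (Hcup x y); tauto).
  assert (Byz : beta y z) by (destruct (Hcup y z); tauto).
  apply Hcap; split; [exact Hxz | exact (Hbeta _ _ _ Bxy Byz)].
Qed.

Theorem lemma3p1 (I : Type) (A : I -> Type)
  (gamma : forall i, A i -> A i -> Prop)
  (Hqo : forall i, quasiorder (gamma i))
  (Hne : forall i, inhabited (A i))
  (j k : I) (Hjk : j <> k)
  (Hj : exists aj bj cj : A j,
          aj <> cj /\ gamma j aj cj /\ ~ gamma j aj bj)
  (Hk : ~ (forall x y : A k, gamma k x y))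
  (Hk1 : exists x y : A k, x <> y) :
  ~ half_space (prod_rel gamma).
Proof.
  intros [_ [beta [[_ Hbeta] [Hcup Hcap]]]].
  destruct Hj as [aj [bj [cj [Hac [Hacg Habg]]]]].
  apply not_all_ex_not in Hk as [p Hp]; apply not_all_ex_not in Hp as [q Hpq].
  pose (d := fun i => epsilon (Hne i) (fun _ => True)).
  pose (x := upd (upd d k q) j aj).
  pose (y := upd (upd d k p) j bj).
  pose (z := upd (upd d k q) j cj).
  assert (Hxz : x = z).
  { apply (half_space_complement_antisym _ beta Hbeta Hcup Hcap x y z).
    - apply prod_rel_upd; [intro i; apply Hqo | exact Hacg].
    - intro H; apply Habg; specialize (H j).
      unfold x, y in H; rewrite !upd_eq in H; exact H.
    - intro H; apply Hpq; specialize (H k).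
      unfold y, z in H; rewrite !(upd_neq _ j _ k Hjk), !upd_eq in H; exact H. }
  apply Hac; apply (f_equal (fun f => f j)) in Hxz.
  unfold x, z in Hxz; rewrite !upd_eq in Hxz; exact Hxz.
Qed.
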